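(* Under the hypotheses and notation of the following setup: $d>0$, $\ell$ a certified lower bound with certificate matrix $\Lambda$, $f(d,\ell)=1$, $i\in\{1,\dots,m\}$, $L_i:=a_i^\top y(d,\ell)-\gamma_i(d,\ell)$, $\hat\lambda_i:=\gamma_i(d,\ell)Dt(d,\ell)-DA^\top B(d)^{-1}a_i$, $\tilde\lambda_i:=\Lambda\hat\lambda_i^-+\hat\lambda_i^+$: if $L_i>u_i$, then $\bar\lambda_i:=\tilde\lambda_i+e_i$ satisfies $A\bar\lambda_i=0$, $\bar\lambda_i\ge0$, $u^\top\bar\lambda_i<0$ (so it is a type-L certificate of infeasibility of $A^\top x\le u$).
   Context: Standing assumption: $A=[a_1|\cdots|a_m]\in\mathbb{R}^{n\times m}$ has columns of unit Euclidean norm and $\{A\lambda:\lambda\ge0\}=\mathbb{R}^n$; $u\in\mathbb{R}^m$. $D=\mathrm{diag}(d)$; $r(\ell)=\tfrac12(u+\ell)$, $v(\ell)=\tfrac12(u-\ell)$, $B(d)=ADA^\top$, $y(d,\ell)=B(d)^{-1}ADr(\ell)$, $t(d,\ell)=A^\top y(d,\ell)-r(\ell)$, $f(d,\ell)=v(\ell)^\top Dv(\ell)-t(d,\ell)^\top Dt(d,\ell)$, $\gamma_i(d,\ell)=\sqrt{f(d,\ell)a_i^\top B(d)^{-1}a_i}$ when $f(d,\ell)>0$. $\ell$ is a certified lower bound with certificate matrix $\Lambda\in\mathbb{R}^{m\times m}$ if $A\Lambda=-A$, $\Lambda\ge0$, $-\Lambda^\top u\ge\ell$. $w^\pm$ denote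 positive/negative parts; $e_i$ is the $i$-th unit vector. *)

(* matrices over an arbitrary real closed field R
   (real closed so that Num.sqrt is available for gamma_i). *)
From HB Require Import structures.
From mathcomp Require Import all_boot all_order all_algebra.
Set Implicit Arguments. Unset Strict Implicit. Unset Printing Implicit Defensive.
Import Order.TTheory GRing.Theory Num.Theory.
Local Open Scope ring_scope.

Section Defs.
Variable R : rcfType.
Variables n m : nat.
Implicit Types (A : 'M[R]_(n, m)) (u d l : 'cV[R]_m).

Definition Dm d : 'M[R]_m := diag_mx d^T.
Definition rv u l : 'cV[R]_m := (2%:R)^-1 *: (u + l).
Definition vv u l : 'cV[R]_m := (2%:R)^-1 *: (u - l).
Definition Bm A d : 'M[R]_n := A *m Dm d *m A^T.
Definition yv A u d l : 'cV[R]_n := invmx (Bm A d) *m (A *m (Dm d *m rv u l)).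
Definition tv A u d l : 'cV[R]_m := A^T *m yv A u d l - rv u l.
Definition fv A u d l : R :=
  (((vv u l)^T *m Dm d *m vv u l) - ((tv A u d l)^T *m Dm d *m tv A u d l)) ord0 ord0.
(* gamma_i(d,l) = sqrt(f(d,l) a_i^T B(d)^{-1} a_i)   (meaningful when f > 0) *)
Definition gammav A u d l (i : 'I_m) : R :=
  Num.sqrt (fv A u d l * ((col i A)^T *m invmx (Bm A d) *m col i A) ord0 ord0).
Definition pospart (k : nat) (w : 'cV[R]_k) : 'cV[R]_k := map_mx (fun x => Num.max x 0) w.
Definition negpart (k : nat) (w : 'cV[R]_k) : 'cV[R]_k := map_mx (fun x => Num.max (- x) 0) w.
Definition evec (i : 'I_m) : 'cV[R]_m := delta_mx i ord0.
End Defs.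
Arguments evec {R m} i.

(* An l-certificate Lam turns any w into Lam w^- + w^+, which has the same image
   under A, is nonnegative, and (since Lam^T u <= -l) costs at most
   sum_j (r_j w_j + v_j |w_j|) against u.  Take w = lamhat_i = D z with
   z = gamma t - A^T B^-1 a_i.  Because A D t = 0, A D z = -a_i, and the same
   D-orthogonality gives r^T D z = -gamma t^T D t - a_i^T y and
   z^T D z = gamma^2 t^T D t + a_i^T B^-1 a_i = gamma^2 v^T D v when f = 1.
   Cauchy-Schwarz then bounds sum_j v_j d_j |z_j| by gamma v^T D v, so the cost
   of the lift is at most gamma - a_i^T y = -L_i, and adding e_i gives
   u_i - L_i < 0. *)
From HB Require Import structures.
From mathcomp Require Import all_boot all_order all_algebra.
From mathcomp Require Import ring lra.
Import Order.TTheory GRing.Theory Num.Theory.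
Set Implicit Arguments.
Unset Strict Implicit.
Unset Printing Implicit Defensive.
Local Open Scope ring_scope.

Section WeightedSums.
Variable R : realFieldType.

Lemma weighted_CauchySchwarz (I : finType) (p w q : I -> R) :
  (forall j, 0 <= w j) ->
  (\sum_j p j * w j * q j) ^+ 2 <=
    (\sum_j p j * w j * p j) * (\sum_j q j * w j * q j).
Proof.
move=> w_ge0; set S := \sum_j p j * w j * q j.
set P := \sum_j p j * w j * p j; set Q := \sum_j q j * w j * q j.
have disc x : 0 <= x ^+ 2 * P - 2 * x * S + Q.
  have -> : x ^+ 2 * P - 2 * x * S + Q =
            \sum_j (x * p j - q j) * w j * (x * p j - q j).
    by rewrite !mulr_sumr -sumrB -big_split /=; apply: eq_bigr => j _; ring.
  by apply: sumr_ge0 => j _; rewrite mulrC mulrA -expr2 mulr_ge0 ?sqr_ge0.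
have P_ge0 : 0 <= P.
  by apply: sumr_ge0 => j _; rewrite mulrC mulrA -expr2 mulr_ge0 ?sqr_ge0.
have [P0 | P_gt0] := eqVneq P 0.
  have [->| S_neq0] := eqVneq S 0; first by rewrite P0 mul0r expr0n.
  have := disc ((Q + 1) / (2 * S)).
  have -> : ((Q + 1) / (2 * S)) ^+ 2 * P - 2 * ((Q + 1) / (2 * S)) * S + Q = -1.
    by rewrite P0; field.
  by rewrite oppr_ge0 ler10.
have {}P_gt0 : 0 < P by rewrite lt_neqAle eq_sym P_gt0.
have := disc (S / P).
have -> : (S / P) ^+ 2 * P - 2 * (S / P) * S + Q = Q - S ^+ 2 / P.
  by field; rewrite gt_eqF.
by rewrite subr_ge0 ler_pdivrMr // mulrC.
Qed.

Lemma cost_pos_neg (u l x : R) :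
  u * Num.max x 0 - l * Num.max (- x) 0 =
    2^-1 * (u + l) * x + 2^-1 * (u - l) * `|x|.
Proof.
have [x_ge0 | x_lt0] := lerP 0 x.
  by rewrite max_r ?oppr_le0 // ger0_norm //; field.
by rewrite max_l ?oppr_ge0 ?ltW // ltr0_norm //; field.
Qed.

End WeightedSums.

Section DiagonalForms.
Variable R : rcfType.

Lemma dot_colE k (p q : 'cV[R]_k) :
  (p^T *m q) ord0 ord0 = \sum_j p j ord0 * q j ord0.
Proof. by rewrite mxE; apply: eq_bigr => j _; rewrite mxE. Qed.

Lemma quad_DmE k (p e q : 'cV[R]_k) :
  (p^T *m Dm e *m q) ord0 ord0 = \sum_j p j ord0 * e j ord0 * q j ord0.
Proof.
rewrite /Dm mul_mx_diag mxE; apply: eq_bigr => j _.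
by rewrite !mxE (_ : 0 = ord0) //; apply: val_inj.
Qed.

Lemma quad_DmC k (p e q : 'cV[R]_k) :
  (p^T *m Dm e *m q) ord0 ord0 = (q^T *m Dm e *m p) ord0 ord0.
Proof. by rewrite !quad_DmE; apply: eq_bigr => j _; ring. Qed.

Lemma trmx_Dm k (e : 'cV[R]_k) : (Dm e)^T = Dm e.
Proof. exact: tr_diag_mx. Qed.

Lemma mul_Dm_mxE k (e q : 'cV[R]_k) j : (Dm e *m q) j ord0 = e j ord0 * q j ord0.
Proof. by rewrite /Dm mul_diag_mx !mxE. Qed.

Lemma quad_Dm_ge0 k (e p : 'cV[R]_k) : (forall j, 0 <= e j ord0) ->
  0 <= (p^T *m Dm e *m p) ord0 ord0.
Proof.
move=> e_ge0; rewrite quad_DmE; apply: sumr_ge0 => j _.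
by rewrite mulrC mulrA -expr2 mulr_ge0 ?sqr_ge0.
Qed.

Lemma quad_Dm_eq0 k (e p : 'cV[R]_k) : (forall j, 0 < e j ord0) ->
  (p^T *m Dm e *m p) ord0 ord0 = 0 -> p = 0.
Proof.
move=> e_gt0; rewrite quad_DmE.
have sqE j : p j ord0 * e j ord0 * p j ord0 = p j ord0 ^+ 2 * e j ord0.
  by rewrite mulrC mulrA -expr2.
move=> /psumr_eq0P p0; apply/matrixP => j o; rewrite (ord1 o) mxE.
have /eqP : p j ord0 ^+ 2 * e j ord0 = 0.
  by rewrite -sqE; apply: p0 => // i _; rewrite sqE mulr_ge0 ?sqr_ge0 ?ltW.
by rewrite mulf_eq0 sqrf_eq0 (gt_eqF (e_gt0 j)) orbF => /eqP.
Qed.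

Lemma pospart_sub_negpart k (w : 'cV[R]_k) : pospart w - negpart w = w.
Proof.
apply/matrixP => j o; rewrite !mxE.
have [w_ge0 | w_lt0] := lerP 0 (w j o).
  by rewrite max_r ?subr0 // oppr_le0.
by rewrite max_l ?sub0r ?opprK // oppr_ge0 ltW.
Qed.

Lemma pospart_ge0 k (w : 'cV[R]_k) j : 0 <= pospart w j ord0.
Proof. by rewrite mxE le_max lexx orbT. Qed.

Lemma negpart_ge0 k (w : 'cV[R]_k) j : 0 <= negpart w j ord0.
Proof. by rewrite mxE le_max lexx orbT. Qed.

End DiagonalForms.

Section CertifiedLift.
Variables (R : rcfType) (n m : nat).
Implicit Types (A : 'M[R]_(n, m)) (Lam : 'M[R]_m) (u l w : 'cV[R]_m).

Definition cert_lift Lam w : 'cV[R]_m := Lam *m negpart w + pospart w.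

Lemma mulmx_cert_lift A Lam w : A *m Lam = - A -> A *m cert_lift Lam w = A *m w.
Proof.
move=> ALam; rewrite /cert_lift mulmxDr mulmxA ALam mulNmx addrC.
by rewrite -mulmxBr pospart_sub_negpart.
Qed.

Lemma cert_lift_ge0 Lam w j : (forall j k, 0 <= Lam j k) ->
  0 <= cert_lift Lam w j ord0.
Proof.
move=> Lam_ge0; rewrite mxE addr_ge0 ?pospart_ge0 // mxE.
by apply: sumr_ge0 => k _; rewrite mulr_ge0 ?negpart_ge0.
Qed.

Lemma cost_cert_lift_le Lam u l w :
  (forall j, l j ord0 <= (- (Lam^T *m u)) j ord0) ->
  (u^T *m cert_lift Lam w) ord0 ord0 <=
    \sum_j (rv u l j ord0 * w j ord0 + vv u l j ord0 * `|w j ord0|).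
Proof.
move=> cert; rewrite /cert_lift mulmxDr mulmxA -[u^T *m Lam]trmxK trmx_mul trmxK.
rewrite mxE !dot_colE -big_split /=; apply: ler_sum => j _.
rewrite !mxE -cost_pos_neg addrC lerD2l -mulNr ler_wpM2r ?le_max ?lexx ?orbT //.
by rewrite lerNr; have := cert j; rewrite !mxE.
Qed.

End CertifiedLift.

(* [lamhat_i = Dm d *m zv A u d l (gammav A u d l i) (col i A)]. *)
Definition zv (R : rcfType) (n m : nat) (A : 'M[R]_(n, m)) (u d l : 'cV[R]_m)
    (g : R) (b : 'cV[R]_n) : 'cV[R]_m :=
  g *: tv A u d l - A^T *m (invmx (Bm A d) *m b).

Section DualDirection.
Variables (R : rcfType) (n m : nat) (A : 'M[R]_(n, m)) (u d l : 'cV[R]_m).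
Hypothesis d_gt0 : forall j, 0 < d j ord0.
Hypothesis A_surj : forall x : 'cV[R]_n, exists lam, A *m lam = x.
Implicit Types (g : R) (b : 'cV[R]_n).

Local Notation D := (Dm d).
Local Notation B := (Bm A d).
Local Notation r := (rv u l).
Local Notation t := (tv A u d l).
Local Notation quad p := ((p^T *m Dm d *m p) ord0 ord0).

Lemma Bm_unit : B \in unitmx.
Proof.
rewrite unitmxE unitfE; apply/negP => /det0P [v v_neq0 vB].
have vA : v *m A = 0.
  have vAT0 : (v *m A)^T = 0.
    apply: (quad_Dm_eq0 d_gt0); rewrite trmxK trmx_mul.
    by rewrite !mulmxA -(mulmxA v) -(mulmxA v) -/(Bm A d) vB !mul0mx mxE.
  by rewrite -[v *m A]trmxK vAT0 trmx0.
move/eqP: v_neq0; apply; apply/matrixP => o k.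
have [lam Alam] := A_surj (delta_mx k ord0).
have := congr1 (fun x => (v *m x) o ord0) Alam.
by rewrite /= mulmxA vA mul0mx -colE !mxE => <-.
Qed.

Lemma trmx_invBm : (invmx B)^T = invmx B.
Proof. by rewrite trmx_inv /Bm !trmx_mul trmxK trmx_Dm mulmxA. Qed.

Lemma A_Dm_tv : A *m (D *m t) = 0.
Proof.
have BBi : B *m invmx B = 1%:M := mulmxV Bm_unit.
by rewrite /tv /yv mulmxBr mulmxBr !mulmxA BBi mul1mx subrr.
Qed.

Lemma tv_Dm_orth (q : 'cV[R]_n) : t^T *m D *m (A^T *m q) = 0.
Proof.
have -> : t^T *m D *m (A^T *m q) = (A *m (D *m t))^T *m q.
  by rewrite !trmx_mul trmx_Dm !mulmxA.
by rewrite A_Dm_tv trmx0 mul0mx.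
Qed.

Lemma quad_rv_tv : (r^T *m D *m t) ord0 ord0 = - quad t.
Proof.
have := tv_Dm_orth (yv A u d l).
have -> : A^T *m yv A u d l = t + r by rewrite /tv subrK.
rewrite mulmxDr => /eqP; rewrite addr_eq0 => /eqP ->.
by rewrite [in RHS]mxE opprK quad_DmC.
Qed.

Local Notation c b := (A^T *m (invmx B *m b)).

Lemma A_Dm_zv g b : A *m (D *m zv A u d l g b) = - b.
Proof.
rewrite /zv !mulmxBr -!scalemxAr A_Dm_tv scaler0 sub0r !mulmxA.
by rewrite (mulmxV Bm_unit) mul1mx.
Qed.

Lemma quad_rv_zv g b :
  (r^T *m D *m zv A u d l g b) ord0 ord0 =
    - (g * quad t) - (b^T *m yv A u d l) ord0 ord0.
Proof.
have rDc : r^T *m D *m c b = (b^T *m yv A u d l)^T.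
  by rewrite /yv !trmx_mul !trmxK trmx_invBm trmx_Dm !mulmxA.
rewrite /zv mulmxBr -scalemxAr rDc [LHS]mxE [X in X + _]mxE [X in _ + X]mxE.
by rewrite quad_rv_tv mulrN [_^T ord0 ord0]mxE.
Qed.

Lemma quad_invBm b : quad (c b) = (b^T *m invmx B *m b) ord0 ord0.
Proof.
rewrite trmx_mul trmx_mul trmx_invBm trmxK -!mulmxA (mulmxA A) (mulmxA (A *m D)).
by rewrite (mulmxA (invmx B) B) (mulVmx Bm_unit) mul1mx mulmxA.
Qed.

Lemma invBm_form_ge0 b : 0 <= (b^T *m invmx B *m b) ord0 ord0.
Proof. by rewrite -quad_invBm quad_Dm_ge0 // => j; apply/ltW. Qed.

Lemma quad_zv g b :
  quad (zv A u d l g b) = g ^+ 2 * quad t + (b^T *m invmx B *m b) ord0 ord0.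
Proof.
have tDc : t^T *m D *m c b = 0 by exact: tv_Dm_orth.
have cDt : (c b)^T *m D *m t = 0.
  by rewrite trmx_mul trmxK -!mulmxA A_Dm_tv !mulmx0.
rewrite /zv [(_ - _)^T]linearB /= [(g *: t)^T]linearZ /= ![in LHS]mulmxBl.
rewrite ![in LHS]mulmxBr -![in LHS]scalemxAl -![in LHS]scalemxAr tDc cDt.
rewrite scaler0 subr0 sub0r opprK scalerA -expr2 [LHS]mxE [X in X + _]mxE.
by rewrite quad_invBm.
Qed.

Lemma cost_zv_le g b :
  0 <= g -> (b^T *m invmx B *m b) ord0 ord0 = g ^+ 2 * fv A u d l ->
  \sum_j (r j ord0 * (D *m zv A u d l g b) j ord0
           + vv u l j ord0 * `|(D *m zv A u d l g b) j ord0|)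
    <= g * fv A u d l - (b^T *m yv A u d l) ord0 ord0.
Proof.
move=> g_ge0 beta_g; set z := zv A u d l g b.
set v := vv u l; set nu : R := quad v.
set S := \sum_j v j ord0 * d j ord0 * `|z j ord0|.
have f_nu : fv A u d l = nu - quad t by rewrite /fv [LHS]mxE [X in _ + X]mxE.
have d_ge0 j : 0 <= d j ord0 by exact/ltW.
have nu_ge0 : 0 <= nu by exact: quad_Dm_ge0.
have quad_z : quad z = g ^+ 2 * nu.
  by rewrite quad_zv beta_g f_nu; ring.
have S_le : S <= g * nu.
  have := weighted_CauchySchwarz (fun j => v j ord0) (fun j => `|z j ord0|) d_ge0.
  have -> : \sum_j `|z j ord0| * d j ord0 * `|z j ord0| = quad z.
    rewrite quad_DmE; apply: eq_bigr => j _.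
    by rewrite mulrAC -expr2 real_normK ?num_real // expr2 mulrAC.
  rewrite -quad_DmE -/S quad_z (_ : nu * _ = (g * nu) ^+ 2); last by ring.
  have : 0 <= g * nu by exact: mulr_ge0.
  move: (g * nu) => c; nra.
have Dz j : (D *m z) j ord0 = d j ord0 * z j ord0 := mul_Dm_mxE d z j.
under eq_bigr => j _ do rewrite Dz normrM (gtr0_norm (d_gt0 j)) !mulrA.
rewrite big_split /= -quad_DmE -/S quad_rv_zv f_nu mulrBr; lra.
Qed.

End DualDirection.

Theorem corollary3 (R : rcfType) (n m : nat) (A : 'M[R]_(n, m)) (u : 'cV[R]_m)
  (* columns of A have unit Euclidean norm *)
  (hunit : forall j : 'I_m, \sum_(k < n) (A k j) ^+ 2 = 1)
  (* the conic hull of the columns of A is R^n *)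
  (hspan : forall x : 'cV[R]_n,
      exists lam : 'cV[R]_m, (forall j, 0 <= lam j ord0) /\ A *m lam = x)
  (d l : 'cV[R]_m) (hd : forall j, 0 < d j ord0)
  (Lam : 'M[R]_m)
  (* l is a certified lower bound with certificate matrix Lam *)
  (hcert1 : A *m Lam = - A)
  (hcert2 : forall j k, 0 <= Lam j k)
  (hcert3 : forall j, l j ord0 <= (- (Lam^T *m u)) j ord0)
  (hf : fv A u d l = 1)
  (i : 'I_m) :
  let Li := ((col i A)^T *m yv A u d l) ord0 ord0 - gammav A u d l i in
  let lamhat := gammav A u d l i *: (Dm d *m tv A u d l)
                - Dm d *m A^T *m invmx (Bm A d) *m col i A in
  let lamtil := Lam *m negpart lamhat + pospart lamhat in
  let lambar := lamtil + evec i in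
  u i ord0 < Li ->
  [/\ A *m lambar = 0,
      (forall j, 0 <= lambar j ord0) &
      ((u^T *m lambar) ord0 ord0 < 0)].
Proof.
move=> Li lamhat lamtil lambar u_lt_L.
have A_surj (x : 'cV[R]_n) : exists lam, A *m lam = x.
  by have [lam [_ ?]] := hspan x; exists lam.
set g := gammav A u d l i; set a := col i A.
have lamhatE : lamhat = Dm d *m zv A u d l g a.
  by rewrite /lamhat /zv [in RHS]mulmxBr -[in RHS]scalemxAr ![in RHS]mulmxA.
have lambarE : lambar = cert_lift Lam lamhat + evec i by [].
have Ae : A *m evec i = a by rewrite /a colE.
split.
- by rewrite lambarE mulmxDr mulmx_cert_lift // lamhatE A_Dm_zv // Ae addNr.
- move=> j; rewrite lambarE mxE addr_ge0 ?cert_lift_ge0 //.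
  by rewrite /evec mxE ler0n.
have g_ge0 : 0 <= g := sqrtr_ge0 _.
have beta_g : (a^T *m invmx (Bm A d) *m a) ord0 ord0 = g ^+ 2 * fv A u d l.
  by rewrite hf mulr1 /g /gammav hf mul1r sqr_sqrtr // invBm_form_ge0.
have cost_split : (u^T *m lambar) ord0 ord0 =
                  (u^T *m cert_lift Lam lamhat) ord0 ord0 + u i ord0.
  by rewrite lambarE mulmxDr [LHS]mxE /evec -colE [X in _ + X]mxE [X in _ + X]mxE.
have := cost_cert_lift_le lamhat hcert3.
have := cost_zv_le hd A_surj g_ge0 beta_g.
rewrite cost_split -lamhatE hf.
move: u_lt_L; rewrite /Li -/g; lra.
Qed.
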